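(* Let $L$ be an $\omega$-regular language over $\Sigma$, let $M=(\Sigma,Q,q_0,\delta)$ be a complete DFA, and let $u\in\Sigma^*$. Define the relation $\approx^u_{S'}$ on $\Sigma^*$ by $x\approx^u_{S'}y$ iff $M(ux)=M(uy)$ and for every $v\in\Sigma^*$, if $M(uxv)=M(u)$ then $\big(u(xv)^\omega\in L\Leftrightarrow u(yv)^\omega\in L\big)$. Then the index of $\approx^u_{S'}$ is bounded by $|Q|\cdot|\approx^u_P|$, where $|\approx^u_P|$ is the index of $\approx^u_P$.
   Context: For a complete DFA $M$ and finite word $w$, $M(w)$ is the state reached from the initial state on $w$. The relation $\approx^u_P$ on $\Sigma^*$ is defined by $x\approx^u_P y$ iff for all $v\in\Sigma^*$, $u(xv)^\omega\in L\Leftrightarrow u(yv)^\omega\in L$. The index of an equivalence relation is its number of equivalence classes. *)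

From mathcomp Require Import all_boot.
Set Implicit Arguments. Unset Strict Implicit. Unset Printing Implicit Defensive.

Definition oword (A : Type) := nat -> A.
Definition olang (A : Type) := oword A -> Prop.

Record buchi (A : finType) := Buchi {
  bstate : finType;
  binit : pred bstate;
  btrans : bstate -> A -> bstate -> bool;
  bacc : pred bstate }.

Definition buchi_accepts (A : finType) (B : buchi A) (w : oword A) : Prop :=
  exists r : nat -> bstate B,
    [/\ binit (r 0),
        (forall i, btrans (r i) (w i) (r i.+1)) &
        (forall N, exists i, N <= i /\ bacc (r i))].

Definition omega_regular (A : finType) (L : olang A) : Prop :=
  exists B : buchi A, forall w, L w <-> buchi_accepts B w.

Definition oprepend (A : Type) (u : seq A) (w : oword A) : oword A :=
  fun i => if i < size u then nth (w 0) u i else w (i - size u).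

(* "u w^omega \in L"; for empty w, w^omega is not an infinite word, and
   we take the membership to be False. *)
Definition in_uomega (A : Type) (L : olang A) (u w : seq A) : Prop :=
  match w with
  | [::] => False
  | a :: _ => L (oprepend u (fun i => nth a w (i %% size w)))
  end.

Record dfa (A : finType) := DFA {
  dstate : finType;
  dinit : dstate;
  dtrans : dstate -> A -> dstate }.

Definition drun (A : finType) (M : dfa A) (w : seq A) : dstate M :=
  foldl (@dtrans A M) (@dinit A M) w.

Definition approxP (A : finType) (L : olang A) (u : seq A) (x y : seq A) : Prop :=
  forall v, in_uomega L u (x ++ v) <-> in_uomega L u (y ++ v).

Definition approxS' (A : finType) (L : olang A) (M : dfa A) (u : seq A)
  (x y : seq A) : Prop :=
  drun M (u ++ x) = drun M (u ++ y) /\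
  forall v, drun M (u ++ x ++ v) = drun M u ->
    (in_uomega L u (x ++ v) <-> in_uomega L u (y ++ v)).

Definition has_index (T : Type) (R : T -> T -> Prop) (n : nat) : Prop :=
  exists f : T -> 'I_n, (forall x y, R x y <-> f x = f y) /\
                        (forall i, exists x, f x = i).

From mathcomp Require Import all_boot boolp.
Set Implicit Arguments. Unset Strict Implicit.

(* Proof idea: the pair (M(ux), [x]_P) determines the S'-class of x, because
   P-equivalence already gives the equivalence of u(xv)^omega and u(yv)^omega
   for every v, without the side condition M(uxv) = M(u).  A relation coarser
   than the kernel of a map into Q x (Sigma^*/~P) has index at most
   |Q| * |~P|. *)

Section FiniteIndex.
Variables (T : Type) (F : finType).

Lemma has_index_kernel (R : T -> T -> Prop) (f : T -> F) :
  (forall x y, R x y <-> f x = f y) ->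
  exists m, has_index R m /\ m <= #|F|.
Proof.
move=> Rf; pose K := [set p | `[< exists x, f x = p >]].
have fK x : f x \in K by rewrite inE; apply/asboolP; exists x.
exists #|K|; split; last exact: max_card.
exists (fun x => enum_rank_in (fK x) (f x)); split=> [x y|i].
  rewrite Rf; split=> [fxy|/(congr1 enum_val)].
    by apply: enum_val_inj; rewrite !enum_rankK_in ?fxy.
  by rewrite !enum_rankK_in.
have := enum_valP i; rewrite inE => /asboolP[x fx].
by exists x; apply: enum_val_inj; rewrite enum_rankK_in.
Qed.

Variables (R : T -> T -> Prop) (g : T -> F).
Hypotheses (R_sym : forall x y, R x y -> R y x)
           (R_trans : forall x y z, R x y -> R y z -> R x z)
           (R_of_g : forall x y, g x = g y -> R x y).

(* The class of x is represented by the finite set of g-values met on it,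
   on which a representative can be picked without choosing elements of T. *)
Let img_class x := [set p | `[< exists y, g y = p /\ R x y >]].

Let mem_img_class x p :
  reflect (exists y, g y = p /\ R x y) (p \in img_class x).
Proof. by rewrite inE; apply: asboolP. Qed.

Let img_class_self x : g x \in img_class x.
Proof. by apply/mem_img_class; exists x; split=> //; apply: R_of_g. Qed.

Let img_classE x y : R x y -> img_class x = img_class y.
Proof.
move=> Rxy; apply/setP=> p.
apply/mem_img_class/mem_img_class=> -[z [gz Rz]]; exists z; split=> //.
  exact: R_trans (R_sym Rxy) Rz.
exact: R_trans Rxy Rz.
Qed.

Let img_class_related x y p :
  p \in img_class x -> p \in img_class y -> R x y.
Proof.
move=> /mem_img_class[z1 [<- Rz1]] /mem_img_class[z2 [gz Rz2]].
exact: R_trans Rz1 (R_trans (R_of_g (esym gz)) (R_sym Rz2)).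
Qed.

Lemma has_index_coarsening : exists m, has_index R m /\ m <= #|F|.
Proof.
pose rep x := odflt (g x) [pick p in img_class x].
have rep_in x : rep x \in img_class x.
  by rewrite /rep; case: pickP => //= /(_ (g x)); rewrite img_class_self.
apply: (has_index_kernel (f := rep)) => x y; split=> [Rxy|rxy].
  rewrite /rep (img_classE Rxy); case: pickP => //= /(_ (g y)).
  by rewrite img_class_self.
by apply: (img_class_related (p := rep x)); rewrite // rxy.
Qed.

End FiniteIndex.

Section ApproxS'.
Variables (A : finType) (L : olang A) (M : dfa A) (u : seq A).

Lemma drun_cat (x v : seq A) :
  drun M (u ++ x ++ v) = foldl (@dtrans A M) (drun M (u ++ x)) v.
Proof. by rewrite /drun catA foldl_cat. Qed.

Lemma approxS'_sym x y : approxS' L M u x y -> approxS' L M u y x.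
Proof.
move=> [Mxy Lxy]; split=> // v Mv; apply: iff_sym; apply: Lxy.
by rewrite drun_cat Mxy -drun_cat.
Qed.

Lemma approxS'_trans x y z :
  approxS' L M u x y -> approxS' L M u y z -> approxS' L M u x z.
Proof.
move=> [Mxy Lxy] [Myz Lyz]; split; first by rewrite Mxy.
move=> v Mv; apply: iff_trans (Lxy v Mv) _; apply: Lyz.
by rewrite drun_cat -Mxy -drun_cat.
Qed.

Lemma approxS'_of_approxP x y :
  drun M (u ++ x) = drun M (u ++ y) -> approxP L u x y -> approxS' L M u x y.
Proof. by move=> Mxy Pxy; split=> // v _; apply: Pxy. Qed.

End ApproxS'.

Theorem lemma11 (A : finType) (L : olang A) (M : dfa A) (u : seq A) :
  omega_regular L ->
  forall n, has_index (approxP L u) n ->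
  exists m, has_index (approxS' L M u) m /\ m <= #|dstate M| * n.
Proof.
move=> _ n [clsP [clsPE _]].
pose g x : dstate M * 'I_n := (drun M (u ++ x), clsP x).
have [|||m [idx_m le_m]] := has_index_coarsening (R := approxS' L M u) (g := g).
- exact: approxS'_sym.
- exact: approxS'_trans.
- by move=> x y [Mxy /clsPE Pxy]; apply: approxS'_of_approxP.
by exists m; rewrite -[n]card_ord -card_prod.
Qed.
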